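(* Let $I$ be a finite index set, $E_i$ ($i\in I$) and $F$ nondeterministic expressions, $X$ a variable, and $p_i>0$ with $\sum_{i\in I}p_i=1$. Then $\mathrm{rec}\,X.\big(\tau.\bigoplus_{i\in I}p_i(X+E_i)+F\big)\ \simeq\ \mathrm{rec}\,X.\big(\tau.\partial(X)+\sum_{i\in I}E_i+F\big)$.
   Context: Fix a set $\mathsf{Act}$ of actions containing $\tau$ and a set $\mathsf{Var}$ of variables. Nondeterministic expressions: $E ::= 0 \mid X \mid \alpha.P \mid \mathrm{rec}\,X.E \mid E + E$; probabilistic expressions: $P ::= \partial(E) \mid P \oplus_p P$ ($0<p<1$). $\sum_{i\in I}E_i$ is an iterated $+$; $\bigoplus_{i\in I}p_iE_i$ denotes an iterated $\oplus$ of the $\partial(E_i)$ with weights chosen so that $E_i$ has probability $p_i$. $\mathrm{rec}\,X$ binds $X$; closed means no free variables; $E[\vec F/\vec X]$ is capture-avoiding substitution. Subdistributions $\mu$ over $S$: $\mu:S\to\mathbb R_{\ge0}$, $|\mu|=\sum\mu(s)\le1$; $\delta_s$ Dirac. Semantics: least relations with $\partial(E)\mapsto\delta_E$; $P\oplus_pQ\mapsto p\mu+(1-p)\nu$ if $P\mapsto\mu,Q\mapsto\nu$; $\alpha.P\xrightarrow{\alpha}\mu$ if $P\mapsto\mu$; $\mathrm{rec}\,X.E\xrightarrow{\alpha}\mu$ if $E[\mathrm{rec}\,X.E/X]\xrightarrow{\alpha}\mu$; $E+F\xrightarrow{\alpha}\mu$ and $F+E\xrightarrow{\alpha}\mu$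 if $E\xrightarrow{\alpha}\mu$. Combined transitions on subdistributions: least relation with $\delta_E\xrightarrow{\alpha}\mu$ if $E\xrightarrow{\alpha}\mu$, closed under $\sum p_i\nu_i\xrightarrow{\alpha}\sum p_i\mu_i$ ($\nu_i\xrightarrow{\alpha}\mu_i$, $p_i\ge0$, $\sum p_i\le1$). A derivation is $(\mu_i^{\to},\mu_i^{\times})_{i\in\mathbb N}$ with $\mu_i^{\to}\xrightarrow{\tau}\mu^{\to}_{i+1}+\mu^{\times}_{i+1}$; $\mu\Rightarrow\nu$ iff a derivation has $\mu=\mu_0^{\to}+\mu_0^{\times}$, $\nu=\sum_i\mu_i^\times$. $\mu\xRightarrow{\alpha}\nu$ iff $\mu\Rightarrow\xrightarrow{\alpha}\Rightarrow\nu$; $\xRightarrow{\hat\alpha}$ is $\Rightarrow$ for $\alpha=\tau$, else $\xRightarrow{\alpha}$. Lifting of a relation to subdistributions: least relation with $\delta_E\mathcal R\delta_F$ for $E\mathcal RF$, closed under convex combinations with coefficients summing to at most 1. Weak bisimulation on closed expressions: if $E\mathcal RF$ and $E\xrightarrow{\alpha}\mu$ then $F\xRightarrow{\hat\alpha}\nu$ with $\mu\mathcal R\nu$, and symmetrically; $\approx$ is weak bisimilarity. For closed $E,F$: $E\simeq F$ iff $E\xrightarrow{\alpha}\mu$ implies $F\xRightarrow{\alpha}\nu$ with $\mu\approx\nu$ and symmetrically. For open expressions with free variables $\vec X$: $E\simeq F$ iff $E[\vec G/\vec X]\simeq F[\vec G/\vec X]$ for all closed $\vec G$. *)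

From Stdlib Require Import Reals List.
From Stdlib Require Import ClassicalEpsilon.
Import ListNotations.
Open Scope R_scope.

(* ---------- Syntax (locally nameless / de Bruijn variables) ----------
   Variables are de Bruijn indices: [Var 0] under a [Rec] refers to the
   variable bound by that [Rec]. *)
Inductive nexpr (Act : Type) : Type :=
| Nil : nexpr Act
| Var : nat -> nexpr Act
| Pre : Act -> pexpr Act -> nexpr Act
| Rec : nexpr Act -> nexpr Act
| Sum : nexpr Act -> nexpr Act -> nexpr Act
with pexpr (Act : Type) : Type :=
| Dirac : nexpr Act -> pexpr Act
| PSum : R -> pexpr Act -> pexpr Act -> pexpr Act.

Arguments Nil {Act}.
Arguments Var {Act} _.
Arguments Pre {Act} _ _.
Arguments Rec {Act} _.
Arguments Sum {Act} _ _.
Arguments Dirac {Act} _.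
Arguments PSum {Act} _ _ _.

Fixpoint wfN {Act} (E : nexpr Act) : Prop :=
  match E with
  | Nil => True
  | Var _ => True
  | Pre _ P => wfP P
  | Rec E => wfN E
  | Sum E F => wfN E /\ wfN F
  end
with wfP {Act} (P : pexpr Act) : Prop :=
  match P with
  | Dirac E => wfN E
  | PSum p P Q => (0 < p < 1) /\ wfP P /\ wfP Q
  end.

Fixpoint closedN_at {Act} (k : nat) (E : nexpr Act) : Prop :=
  match E with
  | Nil => True
  | Var n => (n < k)%nat
  | Pre _ P => closedP_at k P
  | Rec E => closedN_at (S k) E
  | Sum E F => closedN_at k E /\ closedN_at k F
  end
with closedP_at {Act} (k : nat) (P : pexpr Act) : Prop :=
  match P with
  | Dirac E => closedN_at k E
  | PSum _ P Q => closedP_at k P /\ closedP_at k Q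
  end.

Definition cexpr {Act} (E : nexpr Act) : Prop := closedN_at 0 E /\ wfN E.

Fixpoint renN {Act} (r : nat -> nat) (E : nexpr Act) : nexpr Act :=
  match E with
  | Nil => Nil
  | Var n => Var (r n)
  | Pre a P => Pre a (renP r P)
  | Rec E => Rec (renN (fun n => match n with O => O | S m => S (r m) end) E)
  | Sum E F => Sum (renN r E) (renN r F)
  end
with renP {Act} (r : nat -> nat) (P : pexpr Act) : pexpr Act :=
  match P with
  | Dirac E => Dirac (renN r E)
  | PSum p P Q => PSum p (renP r P) (renP r Q)
  end.

Definition up {Act} (s : nat -> nexpr Act) : nat -> nexpr Act :=
  fun n => match n with O => Var O | S m => renN S (s m) end.

Fixpoint substN {Act} (s : nat -> nexpr Act) (E : nexpr Act) : nexpr Act :=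
  match E with
  | Nil => Nil
  | Var n => s n
  | Pre a P => Pre a (substP s P)
  | Rec E => Rec (substN (up s) E)
  | Sum E F => Sum (substN s E) (substN s F)
  end
with substP {Act} (s : nat -> nexpr Act) (P : pexpr Act) : pexpr Act :=
  match P with
  | Dirac E => Dirac (substN s E)
  | PSum p P Q => PSum p (substP s P) (substP s Q)
  end.

Definition subst0 {Act} (G E : nexpr Act) : nexpr Act :=
  substN (fun n => match n with O => G | S m => Var m end) E.

Definition dist (Act : Type) := nexpr Act -> R.

Definition dirac {Act} (E : nexpr Act) : dist Act :=
  fun s => if excluded_middle_informative (s = E) then 1 else 0.

Definition weights (p : nat -> R) : Prop :=
  (forall i, 0 <= p i) /\ exists l, infinite_sum p l /\ l <= 1.

Definition is_comb {Act} (p : nat -> R) (mus : nat -> dist Act) (mu : dist Act) : Prop :=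
  forall s, infinite_sum (fun i => p i * mus i s) (mu s).

Inductive pstep {Act} : pexpr Act -> dist Act -> Prop :=
| pstep_dirac E : pstep (Dirac E) (dirac E)
| pstep_psum p P Q mu nu :
    pstep P mu -> pstep Q nu ->
    pstep (PSum p P Q) (fun s => p * mu s + (1 - p) * nu s).

Inductive trans {Act} : nexpr Act -> Act -> dist Act -> Prop :=
| trans_pre a P mu : pstep P mu -> trans (Pre a P) a mu
| trans_rec E a mu : trans (subst0 (Rec E) E) a mu -> trans (Rec E) a mu
| trans_suml E F a mu : trans E a mu -> trans (Sum E F) a mu
| trans_sumr E F a mu : trans E a mu -> trans (Sum F E) a mu.

Inductive ctrans {Act} : dist Act -> Act -> dist Act -> Prop :=
| ctrans_dirac E a mu : trans E a mu -> ctrans (dirac E) a mu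
| ctrans_comb a p nus mus nu mu :
    weights p -> (forall i, ctrans (nus i) a (mus i)) ->
    is_comb p nus nu -> is_comb p mus mu -> ctrans nu a mu.

Definition derivation {Act} (tau : Act) (mto mx : nat -> dist Act) : Prop :=
  (forall i s, 0 <= mto i s /\ 0 <= mx i s) /\
  forall i, ctrans (mto i) tau (fun s => mto (S i) s + mx (S i) s).

Definition wstep {Act} (tau : Act) (mu nu : dist Act) : Prop :=
  exists mto mx, derivation tau mto mx /\
    (forall s, mu s = mto 0%nat s + mx 0%nat s) /\
    (forall s, infinite_sum (fun i => mx i s) (nu s)).

Definition wtrans {Act} (tau : Act) (mu : dist Act) (a : Act) (nu : dist Act) : Prop :=
  exists mu1 mu2, wstep tau mu mu1 /\ ctrans mu1 a mu2 /\ wstep tau mu2 nu.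

Definition wtrans_hat {Act} (tau : Act) (mu : dist Act) (a : Act) (nu : dist Act) : Prop :=
  (a = tau /\ wstep tau mu nu) \/ (a <> tau /\ wtrans tau mu a nu).

Inductive lift {Act} (Rl : nexpr Act -> nexpr Act -> Prop) : dist Act -> dist Act -> Prop :=
| lift_dirac E F : Rl E F -> lift Rl (dirac E) (dirac F)
| lift_comb p mus nus mu nu :
    weights p -> (forall i, lift Rl (mus i) (nus i)) ->
    is_comb p mus mu -> is_comb p nus nu -> lift Rl mu nu.

Definition weak_bisim {Act} (tau : Act) (Rl : nexpr Act -> nexpr Act -> Prop) : Prop :=
  (forall E F, Rl E F -> cexpr E /\ cexpr F) /\
  (forall E F, Rl E F ->
     (forall a mu, trans E a mu -> exists nu, wtrans_hat tau (dirac F) a nu /\ lift Rl mu nu) /\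
     (forall a nu, trans F a nu -> exists mu, wtrans_hat tau (dirac E) a mu /\ lift Rl mu nu)).

Definition wbisimilar {Act} (tau : Act) (E F : nexpr Act) : Prop :=
  exists Rl, weak_bisim tau Rl /\ Rl E F.

Definition ccong {Act} (tau : Act) (E F : nexpr Act) : Prop :=
  (forall a mu, trans E a mu -> exists nu, wtrans tau (dirac F) a nu /\ lift (wbisimilar tau) mu nu) /\
  (forall a nu, trans F a nu -> exists mu, wtrans tau (dirac E) a mu /\ lift (wbisimilar tau) mu nu).

Definition cong {Act} (tau : Act) (E F : nexpr Act) : Prop :=
  forall s : nat -> nexpr Act, (forall n, cexpr (s n)) ->
    ccong tau (substN s E) (substN s F).

Fixpoint sumR (l : list R) : R :=
  match l with [] => 0 | x :: r => x + sumR r end.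

Fixpoint bigsum {Act} (l : list (nexpr Act)) : nexpr Act :=
  match l with
  | [] => Nil
  | [E] => E
  | E :: r => Sum E (bigsum r)
  end.

(* iterated (+)_p with weights making E_i have probability p_i / (sum of all p) *)
Fixpoint bigoplus {Act} (l : list (R * nexpr Act)) : pexpr Act :=
  match l with
  | [] => Dirac Nil
  | [(p, E)] => Dirac E
  | (p, E) :: r => PSum (p / (p + sumR (map fst r))) (Dirac E) (bigoplus r)
  end.

(* Write [L] and [R] for the left and right recursive expressions. [R] [tau]-moves to
   itself and offers every move of the [E_i] and of [F]; [L] [tau]-moves to the
   distribution over the states [L + E_i[L/X]], each of which [tau]-moves back to that
   distribution. Iterating this loop, [L] reaches any chosen state [L + E_i[L/X]] with
   probability one (a geometric series) and answers the [E_i]-moves of [R] from there.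
   Hence relating [G[L/X]] with [G[R/X]] for every context [G], and each [L + E_i[L/X]]
   with [R], gives a weak bisimulation; as the initial [tau]-steps of [L] and [R] answer
   each other, the congruence holds. Closing substitutions commute with the
   construction, so the open case reduces to the closed one. *)

From Pilot Require Import Defs.
From Stdlib Require Import Reals List Lia Lra.
From Stdlib Require Import ClassicalEpsilon FunctionalExtensionality.
Import ListNotations.
Open Scope R_scope.

Scheme nexpr_mind := Induction for nexpr Sort Prop
  with pexpr_mind := Induction for pexpr Sort Prop.
Combined Scheme expr_mind from nexpr_mind, pexpr_mind.

Section Substitution.
Context {Act : Type}.

Lemma ren_ext :
  (forall (E : nexpr Act) r r', (forall n, r n = r' n) -> renN r E = renN r' E) /\
  (forall (P : pexpr Act) r r', (forall n, r n = r' n) -> renP r P = renP r' P).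
Proof.
  apply expr_mind; intros; simpl; f_equal; auto.
  apply H. intros [|k]; simpl; auto.
Qed.

Lemma subst_ext :
  (forall (E : nexpr Act) s s', (forall n, s n = s' n) -> substN s E = substN s' E) /\
  (forall (P : pexpr Act) s s', (forall n, s n = s' n) -> substP s P = substP s' P).
Proof.
  apply expr_mind; intros; simpl; f_equal; auto.
  apply H. intros [|k]; simpl; auto. unfold Defs.up. rewrite H0. auto.
Qed.

Lemma ren_ren :
  (forall (E : nexpr Act) r r', renN r (renN r' E) = renN (fun n => r (r' n)) E) /\
  (forall (P : pexpr Act) r r', renP r (renP r' P) = renP (fun n => r (r' n)) P).
Proof.
  apply expr_mind; intros; simpl; f_equal; auto.
  rewrite H. apply (proj1 ren_ext). intros [|k]; simpl; auto.
Qed.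

Lemma subst_ren :
  (forall (E : nexpr Act) s r, substN s (renN r E) = substN (fun n => s (r n)) E) /\
  (forall (P : pexpr Act) s r, substP s (renP r P) = substP (fun n => s (r n)) P).
Proof.
  apply expr_mind; intros; simpl; f_equal; auto.
  rewrite H. apply (proj1 subst_ext). intros [|k]; simpl; auto.
Qed.

Lemma ren_subst :
  (forall (E : nexpr Act) s r, renN r (substN s E) = substN (fun n => renN r (s n)) E) /\
  (forall (P : pexpr Act) s r, renP r (substP s P) = substP (fun n => renN r (s n)) P).
Proof.
  apply expr_mind; intros; simpl; f_equal; auto.
  rewrite H. apply (proj1 subst_ext). intros [|k]; simpl; auto.
  rewrite !(proj1 ren_ren). apply (proj1 ren_ext). intros; simpl; auto.
Qed.

Lemma subst_subst :
  (forall (E : nexpr Act) s t, substN t (substN s E) = substN (fun n => substN t (s n)) E) /\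
  (forall (P : pexpr Act) s t, substP t (substP s P) = substP (fun n => substN t (s n)) P).
Proof.
  apply expr_mind; intros; simpl; f_equal; auto.
  rewrite H. apply (proj1 subst_ext). intros [|k]; simpl; auto.
  rewrite (proj1 subst_ren), (proj1 ren_subst). reflexivity.
Qed.

Lemma subst_id :
  (forall (E : nexpr Act) s, (forall n, s n = Var n) -> substN s E = E) /\
  (forall (P : pexpr Act) s, (forall n, s n = Var n) -> substP s P = P).
Proof.
  apply expr_mind; intros; simpl; f_equal; auto.
  apply H. intros [|k]; simpl; auto. unfold Defs.up. rewrite H0. reflexivity.
Qed.

(* [subst0 H] unfolds to [substN (top_subst H)], which also applies to probabilistic expressions. *)
Definition top_subst (H : nexpr Act) : nat -> nexpr Act :=
  fun n => match n with O => H | S m => Var m end.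

Lemma subst0_Rec (H K : nexpr Act) :
  subst0 H (Rec K) = Rec (substN (Defs.up (top_subst H)) K).
Proof. reflexivity. Qed.

Lemma subst0_unfold (H K : nexpr Act) :
  let K' := substN (Defs.up (top_subst H)) K in
  subst0 (Rec K') K' = subst0 H (subst0 (Rec K) K).
Proof.
  unfold subst0. rewrite !(proj1 subst_subst).
  apply (proj1 subst_ext). intros [|[|k]]; simpl; auto.
  rewrite (proj1 subst_ren). apply (proj1 subst_id). reflexivity.
Qed.

Lemma closed_ren :
  (forall (E : nexpr Act) k k' r, closedN_at k E ->
     (forall n, (n < k)%nat -> (r n < k')%nat) -> closedN_at k' (renN r E)) /\
  (forall (P : pexpr Act) k k' r, closedP_at k P ->
     (forall n, (n < k)%nat -> (r n < k')%nat) -> closedP_at k' (renP r P)).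
Proof.
  apply expr_mind; intros; simpl in *; intuition eauto.
  eapply H; eauto. intros [|j] Hj; [lia|]. specialize (H1 j). lia.
Qed.

Lemma closed_subst :
  (forall (E : nexpr Act) k m s, closedN_at k E ->
     (forall n, (n < k)%nat -> closedN_at m (s n)) -> closedN_at m (substN s E)) /\
  (forall (P : pexpr Act) k m s, closedP_at k P ->
     (forall n, (n < k)%nat -> closedN_at m (s n)) -> closedP_at m (substP s P)).
Proof.
  apply expr_mind; intros; simpl in *; intuition eauto.
  eapply H; eauto. intros [|j] Hj; simpl; [lia|].
  eapply (proj1 closed_ren); [apply H1; lia|]. intros; lia.
Qed.

Lemma closed_subst_closed :
  (forall (E : nexpr Act) m s, (forall n, closedN_at m (s n)) -> closedN_at m (substN s E)) /\
  (forall (P : pexpr Act) m s, (forall n, closedN_at m (s n)) -> closedP_at m (substP s P)).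
Proof.
  apply expr_mind; intros; simpl in *; intuition eauto.
  eapply H; eauto. intros [|j]; simpl; [lia|].
  eapply (proj1 closed_ren); [apply H0|]. intros; lia.
Qed.

Lemma wf_ren :
  (forall (E : nexpr Act) r, wfN E -> wfN (renN r E)) /\
  (forall (P : pexpr Act) r, wfP P -> wfP (renP r P)).
Proof. apply expr_mind; intros; simpl in *; intuition eauto. Qed.

Lemma wf_subst :
  (forall (E : nexpr Act) s, wfN E -> (forall n, wfN (s n)) -> wfN (substN s E)) /\
  (forall (P : pexpr Act) s, wfP P -> (forall n, wfN (s n)) -> wfP (substP s P)).
Proof.
  apply expr_mind; intros; simpl in *; intuition eauto.
  apply H; auto. intros [|j]; simpl; auto. apply (proj1 wf_ren); auto.
Qed.

Lemma wf_top_subst (H : nexpr Act) n : wfN H -> wfN (top_subst H n).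
Proof. destruct n; simpl; auto. Qed.

Lemma cexpr_subst0 (H G : nexpr Act) :
  cexpr H -> closedN_at 1 G -> wfN G -> cexpr (subst0 H G).
Proof.
  intros [Hc Hw] Gc Gw. split.
  - eapply (proj1 closed_subst); eauto. intros [|n] ?; simpl; auto; lia.
  - apply (proj1 wf_subst); auto. intro; apply wf_top_subst; auto.
Qed.

Lemma closed_unfold (K : nexpr Act) :
  closedN_at 1 (Rec K) -> closedN_at 1 (subst0 (Rec K) K).
Proof.
  intros Hc. eapply (proj1 closed_subst); [exact Hc|].
  intros [|[|j]] Hj; simpl; auto; lia.
Qed.

Lemma wf_unfold (K : nexpr Act) : wfN K -> wfN (subst0 (Rec K) K).
Proof. intros Hw. apply (proj1 wf_subst); auto. intro; apply wf_top_subst; auto. Qed.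

Lemma up_closed_wf (s : nat -> nexpr Act) :
  (forall n, cexpr (s n)) -> forall n, closedN_at 1 (Defs.up s n) /\ wfN (Defs.up s n).
Proof.
  intros Hs [|n]; simpl; [split; [lia | exact I]|]. split.
  - eapply (proj1 closed_ren); [apply Hs|]. intros; lia.
  - apply (proj1 wf_ren), Hs.
Qed.

End Substitution.

Section PrefixMoves.
Context {Act : Type}.

(* [P] may still mention the variable [Var 0] of [G]. *)
Inductive prefix_move : nexpr Act -> Act -> pexpr Act -> Prop :=
| prefix_move_Pre a P : prefix_move (Pre a P) a P
| prefix_move_suml G1 G2 a P : prefix_move G1 a P -> prefix_move (Sum G1 G2) a P
| prefix_move_sumr G1 G2 a P : prefix_move G2 a P -> prefix_move (Sum G1 G2) a P
| prefix_move_Rec K a P : prefix_move (subst0 (Rec K) K) a P -> prefix_move (Rec K) a P.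

Inductive unguarded : nexpr Act -> Prop :=
| unguarded_Var : unguarded (Var 0)
| unguarded_suml G1 G2 : unguarded G1 -> unguarded (Sum G1 G2)
| unguarded_sumr G1 G2 : unguarded G2 -> unguarded (Sum G1 G2)
| unguarded_Rec K : unguarded (subst0 (Rec K) K) -> unguarded (Rec K).

Lemma prefix_move_trans (G H : nexpr Act) a P mu :
  prefix_move G a P -> pstep (substP (top_subst H) P) mu -> trans (subst0 H G) a mu.
Proof.
  intros HG; revert mu; induction HG; intros mu HP.
  - constructor. exact HP.
  - apply trans_suml; auto.
  - apply trans_sumr; auto.
  - rewrite subst0_Rec. apply trans_rec. rewrite subst0_unfold. auto.
Qed.

Lemma unguarded_trans (G H : nexpr Act) a mu :
  unguarded G -> trans H a mu -> trans (subst0 H G) a mu.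
Proof.
  intros HG HH; induction HG.
  - exact HH.
  - apply trans_suml; auto.
  - apply trans_sumr; auto.
  - rewrite subst0_Rec. apply trans_rec. rewrite subst0_unfold. auto.
Qed.

Lemma trans_Rec_prefix (B : nexpr Act) a P mu :
  prefix_move B a P -> pstep (substP (top_subst (Rec B)) P) mu -> trans (Rec B) a mu.
Proof. intros HB HP. apply trans_rec. eapply prefix_move_trans; eauto. Qed.

Lemma trans_subst0_Rec_inv (B G : nexpr Act) a mu :
  trans (subst0 (Rec B) G) a mu ->
  (exists P, prefix_move G a P /\ pstep (substP (top_subst (Rec B)) P) mu) \/
  (unguarded G /\ exists P, prefix_move B a P /\ pstep (substP (top_subst (Rec B)) P) mu).
Proof.
  intros Ht. remember (subst0 (Rec B) G) as T eqn:ET. revert G ET.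
  induction Ht; intros G ET;
    destruct G as [| [|k] | a' P' | K | G1 G2]; try discriminate.
  - injection ET as -> ->. left. exists P'. split; [constructor | auto].
  - cbn in ET. injection ET as ->.
    destruct (IHHt B eq_refl) as [[P [HB HP]] | [_ [P [HB HP]]]];
      right; split; try constructor; eauto.
  - rewrite subst0_Rec in ET. injection ET as ->. rewrite subst0_unfold in IHHt.
    destruct (IHHt _ eq_refl) as [[P [HK HP]] | [HK HB]].
    + left. exists P. split; [constructor|]; auto.
    + right. split; [constructor|]; auto.
  - injection ET as -> ->.
    destruct (IHHt _ eq_refl) as [[P [H1 HP]] | [H1 HB]].
    + left. exists P. split; [apply prefix_move_suml|]; auto.
    + right. split; [apply unguarded_suml|]; auto.
  - injection ET as -> ->.
    destruct (IHHt _ eq_refl) as [[P [H2 HP]] | [H2 HB]].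
    + left. exists P. split; [apply prefix_move_sumr|]; auto.
    + right. split; [apply unguarded_sumr|]; auto.
Qed.

Lemma trans_Rec_inv (B : nexpr Act) a mu :
  trans (Rec B) a mu ->
  exists P, prefix_move B a P /\ pstep (substP (top_subst (Rec B)) P) mu.
Proof.
  intros Ht. change (Rec B) with (subst0 (Rec B) (Var 0)) in Ht.
  destruct (trans_subst0_Rec_inv B (Var 0) a mu Ht) as [[P [HP _]] | [_ H]]; auto.
  inversion HP.
Qed.

Lemma prefix_move_closed (G : nexpr Act) a P :
  prefix_move G a P -> closedN_at 1 G -> closedP_at 1 P.
Proof. induction 1; simpl; intuition auto using closed_unfold. Qed.

Lemma prefix_move_wf (G : nexpr Act) a P : prefix_move G a P -> wfN G -> wfP P.
Proof. induction 1; simpl; intuition auto using wf_unfold. Qed.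

End PrefixMoves.

Lemma infinite_sum_ext f g l :
  (forall i, f i = g i) -> infinite_sum f l -> infinite_sum g l.
Proof. intros E Hf. replace g with f; auto. apply functional_extensionality; auto. Qed.

Lemma infinite_sum_cons g l a :
  infinite_sum g l ->
  infinite_sum (fun i => match i with O => a | S k => g k end) (a + l).
Proof.
  intros Hg eps He. destruct (Hg eps He) as [N HN]. exists (S N). intros [|n] Hn; [lia|].
  rewrite decomp_sum by lia. simpl. change (sum_f_R0 (fun i => g i) n) with (sum_f_R0 g n).
  unfold Rdist in *. replace (a + sum_f_R0 g n - (a + l)) with (sum_f_R0 g n - l) by ring.
  apply HN. lia.
Qed.

Lemma infinite_sum_0 : infinite_sum (fun _ => 0) 0.
Proof.
  intros eps He. exists O. intros n _. rewrite sum_cte. unfold Rdist.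
  replace (0 * INR (S n) - 0) with 0 by ring. rewrite Rabs_R0. lra.
Qed.

Lemma infinite_sum_scal g l x :
  infinite_sum g l -> infinite_sum (fun n => x * g n) (x * l).
Proof.
  intros Hg. destruct (Req_dec x 0) as [->|Hx].
  - rewrite Rmult_0_l. eapply infinite_sum_ext; [|exact infinite_sum_0]. intros; simpl; ring.
  - intros eps He. assert (Ha : Rabs x > 0) by (apply Rabs_pos_lt; auto).
    destruct (Hg (eps / Rabs x)) as [N HN]; [apply Rdiv_lt_0_compat; lra|].
    exists N. intros n Hn. specialize (HN n Hn). unfold Rdist in *.
    replace (sum_f_R0 (fun k => x * g k) n) with (x * sum_f_R0 g n)
      by (rewrite scal_sum; apply sum_eq; intros; ring).
    rewrite <- Rmult_minus_distr_l, Rabs_mult.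
    apply Rmult_lt_compat_l with (r := Rabs x) in HN; auto.
    replace (Rabs x * (eps / Rabs x)) with eps in HN by (field; lra). exact HN.
Qed.

Lemma infinite_sum_geometric x c :
  0 <= c < 1 -> infinite_sum (fun k => x * c ^ k) (x / (1 - c)).
Proof.
  intros Hc. assert (G := GP_infinite c ltac:(rewrite Rabs_right; lra)).
  apply (infinite_sum_scal _ _ x) in G.
  eapply infinite_sum_ext; [|exact G]. intros; simpl; ring.
Qed.

Section FiniteSums.
Context {A : Type}.
Implicit Types (l : list A) (f g : A -> R).

Lemma sumR_ext l f g : (forall x, In x l -> f x = g x) -> sumR (map f l) = sumR (map g l).
Proof. induction l; simpl; intros H; auto. rewrite H, IHl; auto. Qed.

Lemma sumR_add l f g : sumR (map (fun x => f x + g x) l) = sumR (map f l) + sumR (map g l).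
Proof. induction l; simpl; [ring | rewrite IHl; ring]. Qed.

Lemma sumR_sub l f g : sumR (map (fun x => f x - g x) l) = sumR (map f l) - sumR (map g l).
Proof. induction l; simpl; [ring | rewrite IHl; ring]. Qed.

Lemma sumR_scal l f c : sumR (map (fun x => c * f x) l) = c * sumR (map f l).
Proof. induction l; simpl; [ring | rewrite IHl; ring]. Qed.

Lemma sumR_le l f g : (forall x, In x l -> f x <= g x) -> sumR (map f l) <= sumR (map g l).
Proof.
  induction l as [|a l IH]; simpl; intros H; [lra|].
  specialize (H a (or_introl eq_refl)) as Ha. specialize (IH (fun x h => H x (or_intror h))). lra.
Qed.

Lemma sumR_ge0 l f : (forall x, In x l -> 0 <= f x) -> 0 <= sumR (map f l).
Proof.
  intros H. replace 0 with (sumR (map (fun _ => 0) l)) by (clear H; induction l; simpl; lra).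
  apply sumR_le; auto.
Qed.

Lemma sumR_gt0 l f x :
  In x l -> 0 < f x -> (forall y, In y l -> 0 <= f y) -> 0 < sumR (map f l).
Proof.
  induction l as [|a l IH]; simpl; intros Hx Hfx H; [destruct Hx|].
  assert (Ha := H a (or_introl eq_refl)).
  assert (Hl := sumR_ge0 l f (fun y h => H y (or_intror h))).
  destruct Hx as [<-|Hx]; [lra|].
  specialize (IH Hx Hfx (fun y h => H y (or_intror h))). lra.
Qed.

Definition nth_or {B} l (h : A -> B) (d : B) (i : nat) : B :=
  match nth_error l i with Some x => h x | None => d end.

Lemma nth_or_In {B} l (h : A -> B) d (P : B -> Prop) :
  P d -> (forall x, In x l -> P (h x)) -> forall i, P (nth_or l h d i).
Proof.
  intros Hd Hl i. unfold nth_or. destruct (nth_error l i) eqn:E; auto.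
  apply Hl. eapply nth_error_In; eauto.
Qed.

Lemma infinite_sum_list l f : infinite_sum (nth_or l f 0) (sumR (map f l)).
Proof.
  induction l as [|x l IH]; simpl.
  - eapply infinite_sum_ext; [|exact infinite_sum_0]. intros [|i]; reflexivity.
  - eapply infinite_sum_ext; [|exact (infinite_sum_cons _ _ (f x) IH)].
    intros [|i]; reflexivity.
Qed.

End FiniteSums.

Section Distributions.
Context {Act : Type}.
Implicit Types (mu nu : Defs.dist Act).

Definition nonneg mu : Prop := forall s, 0 <= mu s.

Lemma dirac_nonneg (E : nexpr Act) : nonneg (dirac E).
Proof. intros s. unfold dirac. destruct excluded_middle_informative; lra. Qed.

Lemma pstep_total (P : pexpr Act) : exists mu, pstep P mu.
Proof.
  induction P as [E | p P1 [mu1 H1] P2 [mu2 H2]]; eexists; constructor; eauto.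
Qed.

Lemma pstep_functional (P : pexpr Act) mu nu : pstep P mu -> pstep P nu -> mu = nu.
Proof.
  intros H1; revert nu; induction H1; intros nu' H2; inversion H2; subst; auto.
  rewrite (IHpstep1 _ H4), (IHpstep2 _ H5). auto.
Qed.

Lemma pstep_nonneg (P : pexpr Act) mu : pstep P mu -> wfP P -> nonneg mu.
Proof.
  induction 1; simpl; intros Hw s.
  - apply dirac_nonneg.
  - destruct Hw as [Hp [H1 H2]]. specialize (IHpstep1 H1 s). specialize (IHpstep2 H2 s).
    apply Rplus_le_le_0_compat; apply Rmult_le_pos; lra.
Qed.

Lemma dist_rel_ext (Q : Defs.dist Act -> Defs.dist Act -> Prop) nu nu' mu mu' :
  Q nu mu -> (forall s, nu s = nu' s) -> (forall s, mu s = mu' s) -> Q nu' mu'.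
Proof.
  intros H E1 E2.
  replace nu' with nu by (apply functional_extensionality; auto).
  replace mu' with mu by (apply functional_extensionality; auto). exact H.
Qed.

Lemma ctrans_ext nu nu' (a : Act) mu mu' :
  ctrans nu a mu -> (forall s, nu s = nu' s) -> (forall s, mu s = mu' s) -> ctrans nu' a mu'.
Proof. apply (dist_rel_ext (fun nu mu => ctrans nu a mu)). Qed.

Definition comb_closed (Q : Defs.dist Act -> Defs.dist Act -> Prop) : Prop :=
  forall p nus mus nu mu, weights p -> (forall i, Q (nus i) (mus i)) ->
    is_comb p nus nu -> is_comb p mus mu -> Q nu mu.

Lemma ctrans_comb_closed (a : Act) : comb_closed (fun nu mu => ctrans nu a mu).
Proof. intros ? ? ? ? ?. apply ctrans_comb. Qed.

Lemma lift_comb_closed (Rl : nexpr Act -> nexpr Act -> Prop) : comb_closed (lift Rl).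
Proof. intros ? ? ? ? ?. apply lift_comb. Qed.

(* The witness [Q nu0 mu0] pads the finite family to the countable one [comb_closed] asks for. *)
Lemma comb_closed_list Q {A} (l : list A) (w : A -> R) (f g : A -> Defs.dist Act) nu0 mu0 :
  comb_closed Q -> Q nu0 mu0 ->
  (forall x, In x l -> 0 <= w x /\ Q (f x) (g x)) -> sumR (map w l) <= 1 ->
  Q (fun s => sumR (map (fun x => w x * f x s) l))
    (fun s => sumR (map (fun x => w x * g x s) l)).
Proof.
  intros HQ H0 Hl Hs.
  apply (HQ (nth_or l w 0) (nth_or l f nu0) (nth_or l g mu0)).
  - split; [apply nth_or_In; [lra | apply Hl] |].
    exists (sumR (map w l)). split; [apply infinite_sum_list | exact Hs].
  - intros i. unfold nth_or. destruct (nth_error l i) eqn:E; auto.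
    apply Hl. eapply nth_error_In; eauto.
  - intros s. eapply infinite_sum_ext; [|apply (infinite_sum_list l (fun x => w x * f x s))].
    intros i. unfold nth_or. destruct nth_error; ring.
  - intros s. eapply infinite_sum_ext; [|apply (infinite_sum_list l (fun x => w x * g x s))].
    intros i. unfold nth_or. destruct nth_error; ring.
Qed.

Lemma comb_closed_scal Q nu mu c :
  comb_closed Q -> Q nu mu -> 0 <= c <= 1 -> Q (fun s => c * nu s) (fun s => c * mu s).
Proof.
  intros HQ H Hc. eapply dist_rel_ext.
  - apply (comb_closed_list Q [tt] (fun _ => c) (fun _ => nu) (fun _ => mu) nu mu); auto.
    + intros _ _. split; [lra | exact H].
    + simpl; lra.
  - intros; simpl; ring.
  - intros; simpl; ring.
Qed.

Lemma lift_mono (Rl Rl' : nexpr Act -> nexpr Act -> Prop) mu nu :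
  (forall E F, Rl E F -> Rl' E F) -> lift Rl mu nu -> lift Rl' mu nu.
Proof. intros HR; induction 1; [constructor | eapply lift_comb]; eauto. Qed.

End Distributions.

Section WeakSteps.
Context {Act : Type} (tau : Act).

(* A [tau]-loop that keeps the fraction [c] of [rho] alive and emits [xi] in each round
   emits [xi0 + (1 + c + c^2 + ...) xi] in total. *)
Lemma wstep_geometric (S0 : nexpr Act) (rho xi0 xi : Defs.dist Act) c :
  ctrans (dirac S0) tau (fun s => rho s + xi0 s) ->
  ctrans rho tau (fun s => c * rho s + xi s) -> 0 <= c < 1 ->
  nonneg rho -> nonneg xi0 -> nonneg xi ->
  wstep tau (dirac S0) (fun s => xi0 s + xi s / (1 - c)).
Proof.
  intros H0 H1 Hc Hrho Hxi0 Hxi.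
  assert (Hck : forall k, 0 <= c ^ k <= 1).
  { intros [|k]; [simpl; lra|]. pose proof (pow_lt_1_compat c (S k) Hc ltac:(lia)). lra. }
  exists (fun i => match i with O => dirac S0 | S k => fun s => c ^ k * rho s end),
         (fun i => match i with O => fun _ => 0 | 1%nat => xi0
                              | S (S k) => fun s => c ^ k * xi s end).
  split; [split | split].
  - intros [|[|i]] s; cbv beta iota; split; try apply dirac_nonneg; auto; try lra;
      (apply Rmult_le_pos; [apply Hck || lra | auto]).
  - intros [|k].
    + eapply ctrans_ext; [exact H0 | |]; intros; simpl; ring.
    + eapply ctrans_ext;
        [apply (comb_closed_scal _ _ _ (c ^ k) (ctrans_comb_closed tau) H1 (Hck k)) | |];
        intros; simpl; ring.
  - intros s; simpl; ring.
  - intros s. rewrite <- (Rplus_0_l (xi0 s + _)).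
    eapply infinite_sum_ext;
      [|apply infinite_sum_cons, infinite_sum_cons, (infinite_sum_geometric (xi s) c Hc)].
    intros [|[|i]]; simpl; auto; ring.
Qed.

Variables (E0 : nexpr Act) (mu0 : Defs.dist Act).
(* Derivations take a combined [tau]-step at every stage, also from the null
   subdistribution; that step is [E0]'s scaled by [0]. *)
Hypothesis E0_tau : trans E0 tau mu0.

Lemma ctrans_null : ctrans (fun _ => 0) tau (fun _ => 0).
Proof.
  eapply ctrans_ext.
  - apply (comb_closed_scal _ (dirac E0) mu0 0 (ctrans_comb_closed tau)); [|lra].
    constructor. exact E0_tau.
  - intros; simpl; ring.
  - intros; simpl; ring.
Qed.

Lemma wstep_refl (mu : Defs.dist Act) : nonneg mu -> wstep tau mu mu.
Proof.
  intros Hmu.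
  exists (fun _ _ => 0), (fun i => match i with O => mu | S _ => fun _ => 0 end).
  split; [split | split].
  - intros [|i] s; simpl; split; auto; lra.
  - intros i. eapply ctrans_ext; [exact ctrans_null | |]; intros; simpl; ring.
  - intros s; simpl; ring.
  - intros s. rewrite <- (Rplus_0_r (mu s)).
    eapply infinite_sum_ext; [|exact (infinite_sum_cons _ _ (mu s) infinite_sum_0)].
    intros [|i]; reflexivity.
Qed.

Lemma trans_wstep (X : nexpr Act) nu : trans X tau nu -> nonneg nu -> wstep tau (dirac X) nu.
Proof.
  intros HX Hnu. eapply (dist_rel_ext (wstep tau)).
  - apply (wstep_geometric X (fun _ => 0) nu (fun _ => 0) 0).
    + eapply ctrans_ext; [constructor; exact HX | |]; intros; simpl; ring.
    + eapply ctrans_ext; [exact ctrans_null | |]; intros; simpl; ring.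
    + lra.
    + intros s; lra.
    + exact Hnu.
    + intros s; lra.
  - reflexivity.
  - intros s; simpl; field.
Qed.

(* An answer of [X] to the challenge [a, nu], in the rooted form required by [ccong]
   and in the hatted form required by [weak_bisim]. *)
Definition wanswer (X : nexpr Act) (a : Act) (nu : Defs.dist Act) : Prop :=
  wtrans tau (dirac X) a nu /\ wtrans_hat tau (dirac X) a nu.

Lemma wanswer_via (X Y : nexpr Act) a nu :
  wstep tau (dirac X) (dirac Y) -> trans Y a nu -> nonneg nu ->
  (a = tau -> wstep tau (dirac X) nu) -> wanswer X a nu.
Proof.
  intros HXY HY Hnu Htau.
  assert (W : wtrans tau (dirac X) a nu).
  { exists (dirac Y), nu.
    split; [exact HXY | split; [constructor; exact HY | apply wstep_refl, Hnu]]. }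
  split; [exact W|].
  destruct (excluded_middle_informative (a = tau)) as [Ha|Ha]; [left | right]; auto.
Qed.

Lemma trans_wanswer (X : nexpr Act) a nu : trans X a nu -> nonneg nu -> wanswer X a nu.
Proof.
  intros HX Hnu. apply (wanswer_via X X); auto.
  - apply wstep_refl, dirac_nonneg.
  - intros ->. apply trans_wstep; auto.
Qed.

End WeakSteps.

Lemma sumR_fst_gt0 {A} (l : list (R * A)) :
  l <> [] -> Forall (fun pe => 0 < fst pe) l -> 0 < sumR (map fst l).
Proof.
  intros Hne Hl. rewrite Forall_forall in Hl. destruct l as [|x r]; [congruence|].
  apply (sumR_gt0 _ fst x); [left; reflexivity | apply Hl; left; reflexivity |].
  intros y Hy. apply Rlt_le, Hl, Hy.
Qed.

Section IteratedOperators.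
Context {Act : Type}.

Lemma bigoplus_cons p E (r : list (R * nexpr Act)) : r <> [] ->
  bigoplus ((p, E) :: r) = PSum (p / (p + sumR (map fst r))) (Dirac E) (bigoplus r).
Proof. destruct r; [congruence | reflexivity]. Qed.

Lemma bigsum_cons (E : nexpr Act) r : r <> [] -> bigsum (E :: r) = Sum E (bigsum r).
Proof. destruct r; [congruence | reflexivity]. Qed.

Lemma substP_bigoplus (s : nat -> nexpr Act) l :
  substP s (bigoplus l) = bigoplus (map (fun pe => (fst pe, substN s (snd pe))) l).
Proof.
  induction l as [|[p E] [|y r] IH]; try reflexivity.
  rewrite !bigoplus_cons by (simpl; congruence). simpl in *. rewrite IH, map_map. reflexivity.
Qed.

Lemma substN_bigsum (s : nat -> nexpr Act) l :
  substN s (bigsum l) = bigsum (map (substN s) l).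
Proof.
  induction l as [|E [|y r] IH]; try reflexivity.
  rewrite !bigsum_cons by (simpl; congruence). simpl in *. rewrite IH. reflexivity.
Qed.

Lemma pstep_bigoplus (l : list (R * nexpr Act)) mu :
  pstep (bigoplus l) mu -> l <> [] -> Forall (fun pe => 0 < fst pe) l ->
  forall s, mu s = sumR (map (fun pe => fst pe * dirac (snd pe) s) l) / sumR (map fst l).
Proof.
  revert mu. induction l as [|[p E] [|y r] IH]; intros mu Hmu Hne Hl s; [congruence| |].
  - inversion Hmu; subst. inversion Hl; subst. simpl in *. field. lra.
  - rewrite bigoplus_cons in Hmu by congruence.
    inversion Hmu as [|? ? ? mu1 mu2 H1 H2]; subst. inversion H1; subst.
    inversion Hl as [|? ? Hp Hr]; subst. simpl in Hp.
    assert (Hpos := sumR_fst_gt0 (y :: r) ltac:(congruence) Hr).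
    rewrite (IH mu2 H2 ltac:(congruence) Hr s).
    simpl in Hpos |- *. field. lra.
Qed.

Lemma wf_bigoplus (l : list (R * nexpr Act)) :
  Forall (fun pe => 0 < fst pe /\ wfN (snd pe)) l -> wfP (bigoplus l).
Proof.
  induction l as [|[p E] [|y r] IH]; intros Hl; [exact I | |].
  - inversion Hl; subst. simpl in *. tauto.
  - rewrite bigoplus_cons by congruence. inversion Hl as [|? ? [Hp HE] Hr]; subst.
    assert (Hpos := sumR_fst_gt0 (y :: r) ltac:(congruence)
                      (Forall_impl _ (fun _ H => proj1 H) Hr)).
    simpl in Hp, HE. repeat split; auto.
    + apply Rdiv_lt_0_compat; lra.
    + apply Rmult_lt_reg_r with (p + sumR (map fst (y :: r))); [lra|].
      unfold Rdiv. rewrite Rmult_assoc, Rinv_l by lra. lra.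
Qed.

Lemma closed_bigoplus k (l : list (R * nexpr Act)) :
  Forall (fun pe => closedN_at k (snd pe)) l -> closedP_at k (bigoplus l).
Proof.
  induction l as [|[p E] [|y r] IH]; intros Hl; [exact I | |].
  - inversion Hl; subst. exact H1.
  - rewrite bigoplus_cons by congruence. inversion Hl; subst. split; auto.
Qed.

Lemma wf_bigsum (l : list (nexpr Act)) : Forall wfN l -> wfN (bigsum l).
Proof.
  induction l as [|E [|y r] IH]; intros Hl; [exact I | |]; inversion Hl; subst; auto.
  rewrite bigsum_cons by congruence. split; auto.
Qed.

Lemma closed_bigsum k (l : list (nexpr Act)) : Forall (closedN_at k) l -> closedN_at k (bigsum l).
Proof.
  induction l as [|E [|y r] IH]; intros Hl; [exact I | |]; inversion Hl; subst; auto.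
  rewrite bigsum_cons by congruence. split; auto.
Qed.

Lemma prefix_move_bigsum (l : list (nexpr Act)) a P :
  prefix_move (bigsum l) a P <-> exists E, In E l /\ prefix_move E a P.
Proof.
  induction l as [|E [|y r] IH].
  - split; [intros H; inversion H | intros [? [[] _]]].
  - split; [intros H; exists E; simpl; auto | intros [E' [[<-|[]] H]]; exact H].
  - rewrite bigsum_cons by congruence. split.
    + intros H. inversion H; subst; [exists E; simpl; auto|].
      destruct (proj1 IH H4) as [E' [HE' H']]. exists E'. simpl; auto.
    + intros [E' [[<-|HE'] H]]; [apply prefix_move_suml; exact H|].
      apply prefix_move_sumr, IH. eauto.
Qed.

End IteratedOperators.

Section RecursionLaw.
Variables (Act : Type) (tau : Act) (l : list (R * nexpr Act)) (F : nexpr Act).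
Hypothesis l_spec : Forall (fun pe => 0 < fst pe /\ closedN_at 1 (snd pe) /\ wfN (snd pe)) l.
Hypothesis l_sum : sumR (map fst l) = 1.
Hypothesis F_closed : closedN_at 1 F.
Hypothesis F_wf : wfN F.

Definition bodyL : nexpr Act :=
  Sum (Pre tau (bigoplus (map (fun pe => (fst pe, Sum (Var 0) (snd pe))) l))) F.
Definition bodyR : nexpr Act := Sum (Sum (Pre tau (Dirac (Var 0))) (bigsum (map snd l))) F.
Definition recL : nexpr Act := Rec bodyL.
Definition recR : nexpr Act := Rec bodyR.
Definition branch (E : nexpr Act) : nexpr Act := Sum recL (subst0 recL E).
Definition muL : Defs.dist Act :=
  fun s => sumR (map (fun pe => fst pe * dirac (branch (snd pe)) s) l).
Definition closeL (P : pexpr Act) : pexpr Act := substP (top_subst recL) P.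
Definition closeR (P : pexpr Act) : pexpr Act := substP (top_subst recR) P.

Lemma l_In pe : In pe l -> 0 < fst pe /\ closedN_at 1 (snd pe) /\ wfN (snd pe).
Proof. rewrite Forall_forall in l_spec. auto. Qed.

Lemma l_In_snd E : In E (map snd l) -> closedN_at 1 E /\ wfN E.
Proof. intros HE. apply in_map_iff in HE as [pe [<- Hpe]]. apply l_In in Hpe. tauto. Qed.

Lemma l_nonempty : l <> [].
Proof. intros ->. simpl in l_sum. lra. Qed.

Lemma cexpr_recL : cexpr recL.
Proof.
  split; simpl; (split; [|auto]).
  - apply closed_bigoplus, Forall_map, Forall_forall.
    intros pe Hpe. apply l_In in Hpe. simpl. split; [lia | tauto].
  - apply wf_bigoplus, Forall_map, Forall_forall.
    intros pe Hpe. apply l_In in Hpe. simpl. tauto.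
Qed.

Lemma cexpr_recR : cexpr recR.
Proof.
  split; simpl; (split; [split|auto]).
  - lia.
  - apply closed_bigsum, Forall_forall. intros E HE. apply l_In_snd in HE. tauto.
  - exact I.
  - apply wf_bigsum, Forall_forall. intros E HE. apply l_In_snd in HE. tauto.
Qed.

Lemma closeL_nonneg P mu : wfP P -> pstep (closeL P) mu -> nonneg mu.
Proof.
  intros HP Hmu. apply (pstep_nonneg _ _ Hmu), (proj2 wf_subst); auto.
  intros n; apply wf_top_subst, cexpr_recL.
Qed.

Lemma closeR_nonneg P nu : wfP P -> pstep (closeR P) nu -> nonneg nu.
Proof.
  intros HP Hnu. apply (pstep_nonneg _ _ Hnu), (proj2 wf_subst); auto.
  intros n; apply wf_top_subst, cexpr_recR.
Qed.

Lemma muL_nonneg : nonneg muL.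
Proof.
  intros s. apply sumR_ge0. intros pe Hpe. apply l_In in Hpe.
  apply Rmult_le_pos; [lra | apply dirac_nonneg].
Qed.

Lemma pstep_closeL_bigoplus mu :
  pstep (closeL (bigoplus (map (fun pe => (fst pe, Sum (Var 0) (snd pe))) l))) mu -> mu = muL.
Proof.
  unfold closeL. rewrite substP_bigoplus, !map_map. simpl. intros Hmu.
  apply functional_extensionality. intros s.
  rewrite (pstep_bigoplus _ _ Hmu).
  - rewrite !map_map. cbn [fst snd].
    change (map (fun pe => fst pe) l) with (map (@fst R (nexpr Act)) l).
    rewrite l_sum. unfold muL, Rdiv. rewrite Rinv_1, Rmult_1_r. reflexivity.
  - intros Hnil. apply map_eq_nil in Hnil. apply l_nonempty, Hnil.
  - apply Forall_map, Forall_forall. intros pe Hpe. apply l_In in Hpe. simpl. tauto.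
Qed.

Lemma recL_tau : trans recL tau muL.
Proof.
  destruct (pstep_total (closeL (bigoplus (map (fun pe => (fst pe, Sum (Var 0) (snd pe))) l))))
    as [mu Hmu].
  rewrite <- (pstep_closeL_bigoplus mu Hmu).
  eapply trans_Rec_prefix; [apply prefix_move_suml, prefix_move_Pre | exact Hmu].
Qed.

Lemma branch_tau E : trans (branch E) tau muL.
Proof. apply trans_suml, recL_tau. Qed.

Lemma recR_tau : trans recR tau (dirac recR).
Proof.
  eapply trans_Rec_prefix; [apply prefix_move_suml, prefix_move_suml, prefix_move_Pre |].
  constructor.
Qed.

Lemma prefix_move_bodyL_inv a P mu :
  prefix_move bodyL a P -> pstep (closeL P) mu ->
  (a = tau /\ mu = muL) \/ prefix_move F a P.
Proof.
  intros HP Hmu. inversion HP as [| ? ? ? ? HPre | ? ? ? ? HF |]; subst; auto.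
  inversion HPre; subst. left. split; auto. apply pstep_closeL_bigoplus; auto.
Qed.

Lemma prefix_move_bodyR_inv a P nu :
  prefix_move bodyR a P -> pstep (closeR P) nu ->
  (a = tau /\ nu = dirac recR) \/ (exists E, In E (map snd l) /\ prefix_move E a P) \/
  prefix_move F a P.
Proof.
  intros HP Hnu. inversion HP as [| ? ? ? ? HL | ? ? ? ? HF |]; subst; auto.
  inversion HL as [| ? ? ? ? HPre | ? ? ? ? HE |]; subst.
  - inversion HPre; subst. left. split; auto. inversion Hnu; reflexivity.
  - right; left. apply prefix_move_bigsum; auto.
Qed.

Section ReachBranch.
Variables (E S0 : nexpr Act).
Hypothesis E_In : In E (map snd l).
Hypothesis S0_tau : trans S0 tau muL.

(* Distinct indices may lead to the same state [branch E]; [hits] collects their weight. *)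
Definition hits (pe : R * nexpr Act) : R :=
  if excluded_middle_informative (branch (snd pe) = branch E) then fst pe else 0.
Definition hit_weight : R := sumR (map hits l).

Lemma hits_bounds pe : In pe l -> 0 <= hits pe <= fst pe.
Proof. intros Hpe. apply l_In in Hpe. unfold hits. destruct excluded_middle_informative; lra. Qed.

Lemma hit_weight_bounds : 0 < hit_weight <= 1.
Proof.
  split.
  - apply in_map_iff in E_In as [pe [HE Hpe]].
    apply (sumR_gt0 _ hits pe Hpe); [|intros; apply hits_bounds; auto].
    unfold hits. destruct excluded_middle_informative as [_|NE]; [apply l_In, Hpe|].
    subst. contradiction.
  - rewrite <- l_sum. apply sumR_le. intros pe Hpe. apply hits_bounds, Hpe.
Qed.

Lemma miss_weight : sumR (map (fun pe => fst pe - hits pe) l) = 1 - hit_weight.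
Proof. rewrite sumR_sub, l_sum. reflexivity. Qed.

Definition missL : Defs.dist Act :=
  fun s => sumR (map (fun pe => (fst pe - hits pe) * dirac (branch (snd pe)) s) l).

Lemma muL_split s : muL s = missL s + hit_weight * dirac (branch E) s.
Proof.
  unfold muL, missL, hit_weight. rewrite Rmult_comm, <- sumR_scal, <- sumR_add.
  apply sumR_ext. intros pe _. unfold hits.
  destruct excluded_middle_informative as [->|_]; ring.
Qed.

Lemma missL_nonneg : nonneg missL.
Proof.
  intros s. apply sumR_ge0. intros pe Hpe. pose proof (hits_bounds pe Hpe).
  apply Rmult_le_pos; [lra | apply dirac_nonneg].
Qed.

(* Each round of [tau]-steps reaches [branch E] with probability [hit_weight] and
   returns to [muL] otherwise. *)
Lemma wstep_to_branch : wstep tau (dirac S0) (dirac (branch E)).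
Proof.
  destruct hit_weight_bounds as [Hm0 Hm1].
  eapply (dist_rel_ext (wstep tau)).
  - apply (wstep_geometric tau S0 missL
             (fun s => hit_weight * dirac (branch E) s)
             (fun s => (1 - hit_weight) * (hit_weight * dirac (branch E) s)) (1 - hit_weight)).
    + eapply ctrans_ext; [constructor; exact S0_tau | reflexivity | apply muL_split].
    + eapply ctrans_ext.
      * apply (comb_closed_list _ l (fun pe => fst pe - hits pe) (fun pe => dirac (branch (snd pe)))
                 (fun _ => muL) (dirac recL) muL (ctrans_comb_closed tau)).
        -- constructor. exact recL_tau.
        -- intros pe Hpe. pose proof (hits_bounds pe Hpe).
           split; [lra | constructor; apply branch_tau].
        -- rewrite miss_weight. lra.
      * reflexivity.
      * intros s. cbv beta. rewrite (sumR_ext _ _ (fun pe => muL s * (fst pe - hits pe)))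
          by (intros; ring).
        rewrite sumR_scal, miss_weight, muL_split. ring.
    + lra.
    + apply missL_nonneg.
    + intros s. pose proof (dirac_nonneg (branch E) s). apply Rmult_le_pos; lra.
    + intros s. pose proof (dirac_nonneg (branch E) s).
      apply Rmult_le_pos; [|apply Rmult_le_pos]; lra.
  - reflexivity.
  - intros s. cbv beta. field. lra.
Qed.

Lemma wstep_through_branch nu :
  trans (branch E) tau nu -> nonneg nu -> wstep tau (dirac S0) nu.
Proof.
  intros Hnu Hnu0. destruct hit_weight_bounds as [Hm0 Hm1].
  eapply (dist_rel_ext (wstep tau)).
  - apply (wstep_geometric tau S0 muL (fun _ => 0)
             (fun s => hit_weight * nu s) (1 - hit_weight)).
    + eapply ctrans_ext; [constructor; exact S0_tau | reflexivity |]. intros; ring.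
    + eapply ctrans_ext.
      * apply (comb_closed_list _ l fst (fun pe => dirac (branch (snd pe)))
                 (fun pe => if excluded_middle_informative (branch (snd pe) = branch E)
                            then nu else muL)
                 (dirac recL) muL (ctrans_comb_closed tau)).
        -- constructor. exact recL_tau.
        -- intros pe Hpe. split; [apply Rlt_le, l_In, Hpe|].
           destruct excluded_middle_informative as [->|_]; constructor; auto using branch_tau.
        -- lra.
      * reflexivity.
      * intros s. cbv beta.
        rewrite (sumR_ext _ _ (fun pe => muL s * (fst pe - hits pe) + nu s * hits pe))
          by (intros pe _; unfold hits; destruct excluded_middle_informative; ring).
        rewrite sumR_add, !sumR_scal, miss_weight. unfold hit_weight. ring.
    + lra.
    + apply muL_nonneg.
    + intros s; lra.
    + intros s. specialize (Hnu0 s). apply Rmult_le_pos; lra.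
  - reflexivity.
  - intros s. cbv beta. field. lra.
Qed.

End ReachBranch.

Lemma wanswer_branch_move S0 E a P nu :
  trans S0 tau muL -> In E (map snd l) -> prefix_move E a P -> pstep (closeL P) nu ->
  wanswer tau S0 a nu.
Proof.
  intros HS0 HE HP Hnu.
  assert (Hnu0 : nonneg nu).
  { apply (closeL_nonneg P); auto. eapply prefix_move_wf; [exact HP | apply l_In_snd, HE]. }
  assert (Hbranch : trans (branch E) a nu)
    by (apply trans_sumr; eapply prefix_move_trans; eauto).
  apply (wanswer_via tau recL muL recL_tau S0 (branch E)); auto.
  - apply wstep_to_branch; auto.
  - intros ->. apply (wstep_through_branch E); auto.
Qed.

Definition bisim_rel (X Y : nexpr Act) : Prop :=
  (exists G, closedN_at 1 G /\ wfN G /\ X = subst0 recL G /\ Y = subst0 recR G) \/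
  (exists E, In E (map snd l) /\ X = branch E /\ Y = recR).

Lemma rel_recL_recR : bisim_rel recL recR.
Proof. left. exists (Var 0). repeat split; simpl; auto. Qed.

Lemma rel_cexpr X Y : bisim_rel X Y -> cexpr X /\ cexpr Y.
Proof.
  intros [[G [HG [HGw [-> ->]]]] | [E [HE [-> ->]]]].
  - split; apply cexpr_subst0; auto using cexpr_recL, cexpr_recR.
  - split; [|apply cexpr_recR]. destruct (l_In_snd E HE) as [HEc HEw].
    change (branch E) with (subst0 recL (Sum (Var 0) E)).
    apply cexpr_subst0; [apply cexpr_recL | simpl; split; [lia | exact HEc] |].
    split; [exact I | exact HEw].
Qed.

Lemma lift_rel_close P mu nu :
  closedP_at 1 P -> wfP P -> pstep (closeL P) mu -> pstep (closeR P) nu -> lift bisim_rel mu nu.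
Proof.
  revert mu nu. induction P as [G | p P1 IH1 P2 IH2]; intros mu nu HP HPw Hmu Hnu.
  - inversion Hmu; subst. inversion Hnu; subst. constructor. left. exists G. auto.
  - destruct HP as [HP1 HP2], HPw as [Hp [HP1w HP2w]].
    inversion Hmu as [|? ? ? mu1 mu2 Hmu1 Hmu2]; subst.
    inversion Hnu as [|? ? ? nu1 nu2 Hnu1 Hnu2]; subst.
    eapply dist_rel_ext.
    + apply (comb_closed_list _ [(p, mu1, nu1); (1 - p, mu2, nu2)] (fun x => fst (fst x))
               (fun x => snd (fst x)) snd mu1 nu1 (lift_comb_closed bisim_rel)); eauto.
      * intros x [<-|[<-|[]]]; simpl; split; eauto; lra.
      * simpl. lra.
    + intros s; simpl; ring.
    + intros s; simpl; ring.
Qed.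

Lemma lift_rel_muL : lift bisim_rel muL (dirac recR).
Proof.
  eapply dist_rel_ext.
  - apply (comb_closed_list _ l fst (fun pe => dirac (branch (snd pe))) (fun _ => dirac recR)
             (dirac recL) (dirac recR) (lift_comb_closed bisim_rel)).
    + constructor. apply rel_recL_recR.
    + intros pe Hpe. split; [apply Rlt_le, l_In, Hpe|].
      constructor. right. exists (snd pe). split; [apply in_map, Hpe | auto].
    + lra.
  - reflexivity.
  - intros s. cbv beta. rewrite (sumR_ext _ _ (fun pe => dirac recR s * fst pe)) by (intros; ring).
    rewrite sumR_scal, l_sum. ring.
Qed.

Definition rooted_transfer (X Y : nexpr Act) : Prop :=
  (forall a mu, trans X a mu -> exists nu, wanswer tau Y a nu /\ lift bisim_rel mu nu) /\
  (forall a nu, trans Y a nu -> exists mu, wanswer tau X a mu /\ lift bisim_rel mu nu).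

Lemma recL_move_answered Y :
  (forall a nu, trans recR a nu -> trans Y a nu) ->
  forall a mu, trans recL a mu -> exists nu, wanswer tau Y a nu /\ lift bisim_rel mu nu.
Proof.
  intros HY a mu Hmu. apply trans_Rec_inv in Hmu as [P [HP Hmu]].
  destruct (prefix_move_bodyL_inv a P mu HP Hmu) as [[-> ->] | HF].
  - exists (dirac recR). split; [|apply lift_rel_muL].
    apply (trans_wanswer tau recL muL recL_tau); [apply HY, recR_tau | apply dirac_nonneg].
  - destruct (pstep_total (closeR P)) as [nu Hnu]. exists nu.
    assert (HPw : wfP P) by (eapply prefix_move_wf; eauto).
    split.
    + apply (trans_wanswer tau recL muL recL_tau); [|eapply closeR_nonneg; eauto].
      apply HY. eapply trans_Rec_prefix; [apply prefix_move_sumr, HF | exact Hnu].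
    + eapply lift_rel_close; eauto. eapply prefix_move_closed; eauto.
Qed.

Lemma recR_move_answered X :
  (forall a mu, trans recL a mu -> trans X a mu) ->
  forall a nu, trans recR a nu -> exists mu, wanswer tau X a mu /\ lift bisim_rel mu nu.
Proof.
  intros HX a nu Hnu. apply trans_Rec_inv in Hnu as [P [HP Hnu]].
  destruct (prefix_move_bodyR_inv a P nu HP Hnu) as [[-> ->] | [[E [HE HEP]] | HF]].
  - exists muL. split; [|apply lift_rel_muL].
    apply (trans_wanswer tau recL muL recL_tau); [apply HX, recL_tau | apply muL_nonneg].
  - destruct (pstep_total (closeL P)) as [mu Hmu]. exists mu.
    destruct (l_In_snd E HE) as [HEc HEw].
    split.
    + eapply wanswer_branch_move; eauto. apply HX, recL_tau.
    + eapply lift_rel_close; eauto.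
      * eapply prefix_move_closed; eauto.
      * eapply prefix_move_wf; eauto.
  - destruct (pstep_total (closeL P)) as [mu Hmu]. exists mu.
    assert (HPw : wfP P) by (eapply prefix_move_wf; eauto).
    split.
    + apply (trans_wanswer tau recL muL recL_tau); [|eapply closeL_nonneg; eauto].
      apply HX. eapply trans_Rec_prefix; [apply prefix_move_sumr, HF | exact Hmu].
    + eapply lift_rel_close; eauto. eapply prefix_move_closed; eauto.
Qed.

Lemma prefix_move_answered G a P :
  prefix_move G a P -> closedN_at 1 G -> wfN G ->
  exists mu nu, pstep (closeL P) mu /\ pstep (closeR P) nu /\
    wanswer tau (subst0 recL G) a mu /\ wanswer tau (subst0 recR G) a nu /\ lift bisim_rel mu nu.
Proof.
  intros HP HG HGw.
  destruct (pstep_total (closeL P)) as [mu Hmu]. destruct (pstep_total (closeR P)) as [nu Hnu].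
  assert (HPw : wfP P) by (eapply prefix_move_wf; eauto).
  exists mu, nu. do 2 (split; [assumption|]). split; [|split].
  - apply (trans_wanswer tau recL muL recL_tau);
      [eapply prefix_move_trans; eauto | eapply closeL_nonneg; eauto].
  - apply (trans_wanswer tau recL muL recL_tau);
      [eapply prefix_move_trans; eauto | eapply closeR_nonneg; eauto].
  - eapply lift_rel_close; eauto. eapply prefix_move_closed; eauto.
Qed.

Lemma context_rooted_transfer G :
  closedN_at 1 G -> wfN G -> rooted_transfer (subst0 recL G) (subst0 recR G).
Proof.
  intros HG HGw. split.
  - intros a mu Hmu.
    destruct (trans_subst0_Rec_inv bodyL G a mu Hmu) as [[P [HP Hmu']] | [HX [P [HP Hmu']]]].
    + destruct (prefix_move_answered G a P HP HG HGw) as [mu' [nu [H1 [_ [_ [Hans Hlift]]]]]].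
      rewrite (pstep_functional _ _ _ Hmu' H1). eauto.
    + apply (recL_move_answered (subst0 recR G)); [intros; apply unguarded_trans; auto |].
      eapply trans_Rec_prefix; eauto.
  - intros a nu Hnu.
    destruct (trans_subst0_Rec_inv bodyR G a nu Hnu) as [[P [HP Hnu']] | [HX [P [HP Hnu']]]].
    + destruct (prefix_move_answered G a P HP HG HGw) as [mu [nu' [_ [H2 [Hans [_ Hlift]]]]]].
      rewrite (pstep_functional _ _ _ Hnu' H2). eauto.
    + apply (recR_move_answered (subst0 recL G)); [intros; apply unguarded_trans; auto |].
      eapply trans_Rec_prefix; eauto.
Qed.

Lemma branch_rooted_transfer E : In E (map snd l) -> rooted_transfer (branch E) recR.
Proof.
  intros HE. destruct (l_In_snd E HE) as [HEc HEw]. split.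
  - intros a mu Hmu. change (branch E) with (subst0 recL (Sum (Var 0) E)) in Hmu.
    destruct (trans_subst0_Rec_inv bodyL _ a mu Hmu) as [[P [HP Hmu']] | [_ [P [HP Hmu']]]].
    + inversion HP as [| ? ? ? ? HV | ? ? ? ? HEP |]; subst; [inversion HV|].
      assert (HPw : wfP P) by (eapply prefix_move_wf; eauto).
      destruct (pstep_total (closeR P)) as [nu Hnu]. exists nu. split.
      * apply (trans_wanswer tau recL muL recL_tau); [|eapply closeR_nonneg; eauto].
        eapply trans_Rec_prefix; [|exact Hnu].
        apply prefix_move_suml, prefix_move_sumr, prefix_move_bigsum. eauto.
      * eapply lift_rel_close; eauto. eapply prefix_move_closed; eauto.
    + apply (recL_move_answered recR); auto. eapply trans_Rec_prefix; eauto.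
  - apply recR_move_answered. intros. apply trans_suml. auto.
Qed.

Lemma rel_rooted_transfer X Y : bisim_rel X Y -> rooted_transfer X Y.
Proof.
  intros [[G [HG [HGw [-> ->]]]] | [E [HE [-> ->]]]].
  - apply context_rooted_transfer; auto.
  - apply branch_rooted_transfer; auto.
Qed.

Lemma weak_bisim_rel : weak_bisim tau bisim_rel.
Proof.
  split; [exact rel_cexpr|].
  intros X Y HXY. destruct (rel_rooted_transfer X Y HXY) as [HL HR]. split.
  - intros a mu Hmu. destruct (HL a mu Hmu) as [nu [[_ Hhat] Hlift]]. eauto.
  - intros a nu Hnu. destruct (HR a nu Hnu) as [mu [[_ Hhat] Hlift]]. eauto.
Qed.

Lemma ccong_recL_recR : ccong tau recL recR.
Proof.
  assert (Hlift : forall mu nu, lift bisim_rel mu nu -> lift (wbisimilar tau) mu nu).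
  { intros mu nu. apply lift_mono. intros X Y HXY.
    exists bisim_rel. split; [apply weak_bisim_rel | exact HXY]. }
  destruct (rel_rooted_transfer _ _ rel_recL_recR) as [HL HR]. split.
  - intros a mu Hmu. destruct (HL a mu Hmu) as [nu [[Hw _] Hl]]. eauto.
  - intros a nu Hnu. destruct (HR a nu Hnu) as [mu [[Hw _] Hl]]. eauto.
Qed.

End RecursionLaw.

Theorem mainTheorem5 (Act : Type) (tau : Act)
  (l : list (R * nexpr Act)) (F : nexpr Act) :
  l <> [] ->
  Forall (fun pe => 0 < fst pe /\ wfN (snd pe)) l ->
  sumR (map fst l) = 1 ->
  wfN F ->
  cong tau
    (Rec (Sum (Pre tau (bigoplus (map (fun pe => (fst pe, Sum (Var O) (snd pe))) l))) F))
    (Rec (Sum (Sum (Pre tau (Dirac (Var O))) (bigsum (map snd l))) F)).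
Proof.
  intros _ Hl Hsum HF s Hs.
  assert (Hup := up_closed_wf s Hs).
  set (l' := map (fun pe => (fst pe, substN (Defs.up s) (snd pe))) l).
  set (F' := substN (Defs.up s) F).
  replace (substN s _) with (recL Act tau l' F')
    by (unfold recL, bodyL, l'; cbn; rewrite substP_bigoplus, !map_map; reflexivity).
  replace (substN s _) with (recR Act tau l' F')
    by (unfold recR, bodyR, l'; cbn; rewrite substN_bigsum, !map_map; reflexivity).
  apply ccong_recL_recR.
  - apply Forall_map. eapply Forall_impl; [|exact Hl]. intros [p E] [Hp HE]. simpl.
    split; [exact Hp | split].
    + apply (proj1 closed_subst_closed). apply Hup.
    + apply (proj1 wf_subst); [exact HE | apply Hup].
  - unfold l'. rewrite map_map. exact Hsum.
  - apply (proj1 closed_subst_closed). apply Hup.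
  - apply (proj1 wf_subst); [exact HF | apply Hup].
Qed.
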